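(* Let $0\le d\le n-1$ and $x_1<\cdots<x_n$ real, $\mathcal{X}=\{x_1,\dots,x_n\}$. Let $A_{d,n}(\mathcal{X})$ be the $(n-d)\times(n-d)$ matrix with entries $h_r(x_i,x_{i+1},\dots,x_{i+d})$, rows indexed by $0\le r\le n-d-1$ and columns by $1\le i\le n-d$. Then \[\det A_{d,n}(\mathcal{X})=\prod_{\substack{1\le i<j\le n\\ j-i\ge d+1}}(x_j-x_i).\] In particular, $A_{d,n}(\mathcal{X})$ is invertible whenever the $x_r$ are pairwise distinct.
   Context: $h_r$ denotes the complete homogeneous symmetric polynomial of degree $r$ (with $h_0=1$). An empty product equals $1$. *)

From HB Require Import structures.
From mathcomp Require Import all_boot all_order all_algebra.
From mathcomp Require Import all_classical all_reals.
Set Implicit Arguments. Unset Strict Implicit. Unset Printing Implicit Defensive.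
Import Order.TTheory GRing.Theory Num.Theory.
Local Open Scope ring_scope.

(* Complete homogeneous symmetric polynomial h_r evaluated at y_0,...,y_{m-1}:
   the sum, over all exponent vectors k = (k_0,...,k_{m-1}) of naturals with
   k_0 + ... + k_{m-1} = r, of the monomial y_0^k_0 ... y_{m-1}^k_{m-1}.
   (Each k_j <= r, so the exponents range over 'I_r.+1.)  h_0 = 1. *)
Definition hsym (R : comRingType) (m r : nat) (y : 'I_m -> R) : R :=
  \sum_(k : {ffun 'I_m -> 'I_r.+1} | (\sum_(j < m) (k j : nat) == r)%N)
     \prod_(j < m) y j ^+ k j.

(* The (n-d) x (n-d) matrix A_{d,n}(X), 0-indexed: entry (r, i) is
   h_r(x_i, x_{i+1}, ..., x_{i+d}). Here x_0 < ... < x_{n-1} are the points. *)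
Definition Amat (R : comRingType) (d n : nat) (x : nat -> R) : 'M[R]_(n - d) :=
  \matrix_(r < n - d, i < n - d) hsym r (fun k : 'I_d.+1 => x (i + k)%N).

(** The generating function of [h_r(y_1, ..., y_m)] is [prod_j 1 / (1 - y_j t)].
    Comparing it for the windows [x_{i+1}, ..., x_{i+d+1}] and [x_i, ..., x_{i+d}]
    gives [h_{r+1}(x_{i+1..i+d+1}) - h_{r+1}(x_{i..i+d}) = (x_{i+d+1} - x_i) h_r(x_{i..i+d+1})].
    Subtracting from each column of [A_{d,n}] its left neighbour therefore leaves
    a first row [1, 0, ..., 0] (as [h_0 = 1]) above the matrix [A_{d+1,n}] with
    its columns scaled by the factors [x_{i+d+1} - x_i]; induction on the size
    concludes. Power series are replaced by polynomials truncated at a degree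
    beyond the coefficients that are compared. *)

From HB Require Import structures.
From mathcomp Require Import all_boot all_order all_algebra.
From mathcomp Require Import all_classical all_reals.
From mathcomp Require Import ring zify.
Import Order.TTheory GRing.Theory Num.Theory.
Set Implicit Arguments. Unset Strict Implicit. Unset Printing Implicit Defensive.
Local Open Scope ring_scope.

Section TruncatedGeometric.
Variable R : comNzRingType.
Implicit Types (a b : R) (p q : {poly R}).

Definition geom (N : nat) a : {poly R} := \sum_(k < N) (a%:P * 'X) ^+ k.

Lemma coef_geom N a k : (geom N a)`_k = if (k < N)%N then a ^+ k else 0.
Proof.
rewrite /geom coef_sum.
under eq_bigr do rewrite exprMn -rmorphXn coefCM coefXn mulr_natr mulrb.
rewrite -big_mkcond /=; case: ifP => hk.
  by rewrite (big_pred1 (Ordinal hk)) // => i; rewrite /= eq_sym.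
rewrite big_pred0 // => i; apply/negbTE/eqP => ek.
by move: (ltn_ord i); rewrite -ek hk.
Qed.

Lemma geom1 a : geom 1 a = 1.
Proof. by rewrite /geom big_ord1 expr0. Qed.

Lemma coefM_eq_lt (M : nat) p q (p' q' : {poly R}) :
  (forall k, (k < M)%N -> p`_k = p'`_k) ->
  (forall k, (k < M)%N -> q`_k = q'`_k) ->
  forall k, (k < M)%N -> (p * q)`_k = (p' * q')`_k.
Proof.
move=> hp hq k hk; rewrite !coefM; apply: eq_bigr => j _.
have hj : (j <= k)%N by rewrite -ltnS.
rewrite hp ?hq //; first exact: leq_ltn_trans (leq_subr _ _) hk.
exact: leq_ltn_trans hj hk.
Qed.

Lemma geom_rec N a : geom N a = 1 - (a ^+ N)%:P * 'X ^+ N + a%:P * 'X * geom N a.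
Proof.
have telescope : 1 - (a%:P * 'X) ^+ N = (1 - a%:P * 'X) * geom N a.
  by rewrite -opprB subrX1 -mulNr opprB.
by rewrite rmorphXn -exprMn telescope; ring.
Qed.

Lemma coef_geom_sub N a b k : (k < N)%N ->
  (geom N a - geom N b)`_k = ((a - b)%:P * 'X * (geom N a * geom N b))`_k.
Proof.
move=> hk; set A := geom N a; set B := geom N b.
have -> : A - B = (a - b)%:P * 'X * (A * B) +
                  (A * (b ^+ N)%:P - B * (a ^+ N)%:P) * 'X ^+ N.
  have ha := geom_rec N a; have hb := geom_rec N b; rewrite -/A in ha; rewrite -/B in hb.
  have ea : (a ^+ N)%:P * 'X ^+ N = 1 + a%:P * 'X * A - A by rewrite [X in _ - X]ha; ring.
  have eb : (b ^+ N)%:P * 'X ^+ N = 1 + b%:P * 'X * B - B by rewrite [X in _ - X]hb; ring.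
  have -> : (A * (b ^+ N)%:P - B * (a ^+ N)%:P) * 'X ^+ N =
            A * ((b ^+ N)%:P * 'X ^+ N) - B * ((a ^+ N)%:P * 'X ^+ N) by ring.
  by rewrite ea eb rmorphB; ring.
by rewrite coefD coefMXn hk addr0.
Qed.

Lemma hsym_coef_prod_geom m r (y : 'I_m -> R) :
  hsym r y = (\prod_(j < m) geom r.+1 (y j))`_r.
Proof.
rewrite /hsym /geom bigA_distr_bigA /= coef_sum.
have monomial (f : {ffun 'I_m -> 'I_r.+1}) :
    \prod_(j < m) ((y j)%:P * 'X) ^+ f j =
    (\prod_(j < m) y j ^+ f j)%:P * 'X ^+ (\sum_(j < m) (f j : nat))%N.
  rewrite -prodrXr rmorph_prod -big_split /=.
  by apply: eq_bigr => j _; rewrite exprMn rmorphXn.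
under [RHS]eq_bigr => f _ do rewrite monomial coefCM coefXn mulr_natr mulrb eq_sym.
by rewrite -big_mkcond.
Qed.

Lemma hsym_coef_prod_geom_lt m r (y : 'I_m -> R) N : (r < N)%N ->
  hsym r y = (\prod_(j < m) geom N (y j))`_r.
Proof.
move=> hr; rewrite hsym_coef_prod_geom.
pose agree p q := forall k, (k < r.+1)%N -> p`_k = q`_k.
suff : agree (\prod_(j < m) geom r.+1 (y j)) (\prod_(j < m) geom N (y j)) by apply.
apply: (big_ind2 agree) => // [p1 q1 p2 q2|j _ k hk]; first exact: coefM_eq_lt.
by rewrite !coef_geom hk (leq_trans hk hr).
Qed.

Lemma hsym0 m (y : 'I_m -> R) : hsym 0 y = 1.
Proof.
rewrite hsym_coef_prod_geom (eq_bigr (fun=> 1)) => [|j _]; last exact: geom1.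
by rewrite big1_eq coef1.
Qed.

Lemma hsym_window_sub (x : nat -> R) i d r :
  hsym r.+1 (fun k : 'I_d.+1 => x (i.+1 + k)%N)
    - hsym r.+1 (fun k : 'I_d.+1 => x (i + k)%N) =
  (x (i + d.+1)%N - x i) * hsym r (fun k : 'I_d.+2 => x (i + k)%N).
Proof.
rewrite !(hsym_coef_prod_geom_lt _ (ltnSn r.+1)) !(hsym_coef_prod_geom_lt _ (ltnW (ltnSn r.+1))).
rewrite /= -coefB; set g := geom r.+2; set Q := \prod_(k < d) g (x (i.+1 + k)%N).
set a := x (i + d.+1)%N; set b := x i.
have head : \prod_(k < d.+1) g (x (i + k)%N) = g b * Q.
  by rewrite big_ord_recl addn0; congr (_ * _); apply: eq_bigr => k _; rewrite lift0 addSnnS.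
rewrite head big_ord_recr /= -/Q addSnnS -/a big_ord_recr /= head.
have -> : Q * g a - g b * Q = Q * (g a - g b) by ring.
rewrite (@coefM_eq_lt r.+2 _ _ Q ((a - b)%:P * 'X * (g a * g b))) //;
  last exact: coef_geom_sub.
have -> : Q * ((a - b)%:P * 'X * (g a * g b)) = (a - b)%:P * ('X * (g b * Q * g a)) by ring.
by rewrite coefCM coefXM.
Qed.

End TruncatedGeometric.

Lemma prod_gap_split (R : comNzRingType) (F : nat -> nat -> R) K d :
  \prod_(i < K + d.+1) \prod_(j < K + d.+1 | (i + d < j)%N) F i j =
  \prod_(i < K) F i (i + d.+1)%N *
  \prod_(i < K + d.+1) \prod_(j < K + d.+1 | (i + d.+1 < j)%N) F i j.
Proof.
set L := (K + d.+1)%N.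
have inner (i : 'I_L) :
    \prod_(j < L | (i + d < j)%N) F i j =
    (if (i < K)%N then F i (i + d.+1)%N else 1) * \prod_(j < L | (i + d.+1 < j)%N) F i j.
  have -> : (if (i < K)%N then F i (i + d.+1)%N else 1) =
            \prod_(j < L | j == (i + d.+1)%N :> nat) F i j.
    case: ifP => hi; first by rewrite (big_pred1 (Ordinal (_ : i + d.+1 < L)%N)) ?ltn_add2r.
    rewrite big_pred0 // => j; apply/negbTE/eqP => ej.
    by move: (ltn_ord j) hi ej; rewrite /L; lia.
  rewrite big_mkcond [in RHS]big_mkcond [X in _ * X]big_mkcond -big_split /=.
  apply: eq_bigr => j _; have [h|h|h] := ltngtP (i + d.+1) j.
  - by rewrite (_ : (i + d < j)%N) ?mul1r //; lia.
  - by rewrite (_ : (i + d < j)%N = false) ?mul1r //; lia.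
  - by rewrite (_ : (i + d < j)%N) ?mulr1 //; lia.
rewrite (eq_bigr _ (fun i _ => inner i)) big_split -big_mkcond /=.
by rewrite (big_ord_widen _ (fun i => F i (i + d.+1)%N) (leq_addr d.+1 K)).
Qed.

Section WindowMatrix.
Variable R : comNzRingType.

Definition hmat d K (x : nat -> R) : 'M[R]_K :=
  \matrix_(r < K, i < K) hsym r (fun k : 'I_d.+1 => x (i + k)%N).

Definition upshift_mx K : 'M[R]_K := \matrix_(i < K, j < K) (i.+1 == j :> nat)%:R.

Lemma det_1_sub_upshift K : \det (1%:M - upshift_mx K) = 1.
Proof.
rewrite -det_tr det_trig.
  by apply: big1 => i _; rewrite !mxE eqxx (gtn_eqF (ltnSn i)) subr0.
apply/is_trig_mxP => i j hij; rewrite !mxE (gtn_eqF (ltnW hij : (i < j.+1)%N)).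
by rewrite -val_eqE /= (gtn_eqF hij) subrr.
Qed.

Lemma mul_upshift_col0 K (A : 'M[R]_K.+1) r : (A *m upshift_mx K.+1) r ord0 = 0.
Proof. by rewrite !mxE; apply: big1 => k _; rewrite !mxE mulr0. Qed.

Lemma mul_upshift_lift K (A : 'M[R]_K.+1) r (j : 'I_K) :
  (A *m upshift_mx K.+1) r (lift ord0 j) = A r (widen_ord (leqnSn K) j).
Proof.
rewrite !mxE (bigD1 (widen_ord (leqnSn K) j)) //= !mxE lift0 eqxx mulr1.
rewrite big1 ?addr0 // => k hk; rewrite !mxE lift0 eqSS.
case: eqP => e; last by rewrite mulr0.
by move: hk; rewrite (_ : k = widen_ord (leqnSn K) j) ?eqxx //; apply: val_inj.
Qed.

Section ColumnReduction.
Variables (d K : nat) (x : nat -> R).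
Let A := hmat d K.+1 x *m (1%:M - upshift_mx K.+1).

Lemma col_reduce0 r : A r ord0 = hmat d K.+1 x r ord0.
Proof. by rewrite /A mulmxBr mulmx1 mxE [X in _ + X]mxE mul_upshift_col0 subr0. Qed.

Lemma col_reduce_lift r (j : 'I_K) :
  A r (lift ord0 j) = hmat d K.+1 x r (lift ord0 j) - hmat d K.+1 x r (widen_ord (leqnSn K) j).
Proof. by rewrite /A mulmxBr mulmx1 mxE [X in _ + X]mxE mul_upshift_lift. Qed.

Lemma col_reduce_row0 (j : 'I_K) : A ord0 (lift ord0 j) = 0.
Proof. by rewrite col_reduce_lift !mxE !hsym0 subrr. Qed.

Lemma col_reduce_minor :
  row' ord0 (col' ord0 A) = hmat d.+1 K x *m diag_mx (\row_(i < K) (x (i + d.+1)%N - x i)).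
Proof.
apply/matrixP => r i; rewrite mul_mx_diag [LHS]mxE [LHS]mxE col_reduce_lift !mxE !lift0 /=.
by rewrite hsym_window_sub mulrC.
Qed.

Lemma det_col_reduce :
  \det (hmat d K.+1 x) = \det (hmat d.+1 K x) * \prod_(i < K) (x (i + d.+1)%N - x i).
Proof.
have -> : \det (hmat d K.+1 x) = \det A by rewrite det_mulmx det_1_sub_upshift mulr1.
rewrite (expand_det_row _ ord0) big_ord_recl big1 => [|j _]; last first.
  by rewrite col_reduce_row0 mul0r.
rewrite addr0 col_reduce0 mxE hsym0 mul1r /cofactor /= expr0 mul1r.
by rewrite col_reduce_minor det_mulmx det_diag; under eq_bigr do rewrite mxE.
Qed.

End ColumnReduction.

Lemma det_hmat d K (x : nat -> R) :
  \det (hmat d K x) = \prod_(i < K + d) \prod_(j < K + d | (i + d < j)%N) (x j - x i).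
Proof.
elim: K d => [|K IH] d.
  rewrite det_mx00 add0n; symmetry; apply: big1 => i _.
  by apply: big_pred0 => j; apply/negbTE; rewrite -leqNgt; have := ltn_ord j; lia.
by rewrite det_col_reduce IH addSnnS (prod_gap_split (fun i j => x j - x i)) mulrC.
Qed.

End WindowMatrix.

Theorem proposition2p11 (R : realType) (n d : nat) (x : nat -> R) :
  (d < n)%N ->
  (forall i j : nat, (i < j)%N -> (j < n)%N -> x i < x j) ->
  \det (Amat d n x) =
    \prod_(i < n) \prod_(j < n | (i + d < j)%N) (x j - x i)
  /\ Amat d n x \in unitmx.
Proof.
move=> hd hinc.
have hdet : \det (Amat d n x) = \prod_(i < n) \prod_(j < n | (i + d < j)%N) (x j - x i).
  by rewrite [Amat _ _ _]/(hmat d (n - d) x) det_hmat subnK // ltnW.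
split => //; rewrite unitmxE hdet unitfE; apply: lt0r_neq0.
apply: prodr_gt0 => i _; apply: prodr_gt0 => j hij; rewrite subr_gt0.
by apply: hinc => //; lia.
Qed.
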